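(* Let $\Gamma=([n],E)$ be a connected simple graph and let $M\subseteq[n]$ be a subset of maximal cardinality such that the induced subgraph $\Gamma|_M$ is isomorphic to the path $L_{|M|}$. Then for every integer $k\ge|M|$ the polytopes $Q_{\Gamma,k}$ and $Q_{\Gamma,|M|-1}$ are normally equivalent, i.e. their normal fans coincide.
   Context: $L_r$ is the path graph on $r$ vertices. For $S\subseteq[n]$ nonempty, $\Delta_S=\mathrm{conv}\{e_s:s\in S\}\subset\mathbb{R}^n$, $e_s$ the standard basis vectors. For an integer $m\ge0$, the $m$-graph polytope is the Minkowski sum $Q_{\Gamma,m}=\sum_{S}\Delta_S$ over all nonempty $S\subseteq[n]$ with $|S|\le m+1$ and $\Gamma|_S$ connected. *)

From HB Require Import structures.
From mathcomp Require Import all_boot all_order all_algebra.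
From mathcomp Require Import reals.
Set Implicit Arguments. Unset Strict Implicit. Unset Printing Implicit Defensive.
Import Order.TTheory GRing.Theory Num.Theory.
Local Open Scope ring_scope.

(** Graphs on [n] = 'I_n: a relation e, assumed symmetric and irreflexive
    (simple graph) in the theorem. *)

Definition induced_rel (n : nat) (e : rel 'I_n) (S : {set 'I_n}) : rel 'I_n :=
  [rel x y | [&& e x y, x \in S & y \in S]].

Definition induced_connected (n : nat) (e : rel 'I_n) (S : {set 'I_n}) : bool :=
  (S != set0) &&
  [forall x in S, forall y in S, connect (induced_rel e S) x y].

Definition connected_graph (n : nat) (e : rel 'I_n) : bool :=
  induced_connected e [set: 'I_n].

Definition induced_is_path (n : nat) (e : rel 'I_n) (S : {set 'I_n}) : Prop :=
  exists f : 'I_#|S| -> 'I_n,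
    [/\ injective f, (forall i, f i \in S) &
        (forall i j : 'I_#|S|,
            e (f i) (f j) = ((i.+1 == j :> nat) || (j.+1 == i :> nat)))].

Definition pt (R : realType) (n : nat) := 'I_n -> R.

Definition dotp (R : realType) (n : nat) (w x : pt R n) : R :=
  \sum_(i < n) w i * x i.

Definition basis_vec (R : realType) (n : nat) (s : 'I_n) : pt R n :=
  fun i => if s == i then 1 else 0.

Definition conv (R : realType) (n : nat) (I : finType) (P : {set I})
    (v : I -> pt R n) : pt R n -> Prop :=
  fun x => exists lam : I -> R,
    [/\ (forall s, s \in P -> 0 <= lam s),
        \sum_(s in P) lam s = 1 &
        (forall i, x i = \sum_(s in P) lam s * v s i)].

Definition simplex (R : realType) (n : nat) (S : {set 'I_n}) : pt R n -> Prop :=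
  conv S (@basis_vec R n).

Definition minkowski (R : realType) (n : nat) (J : finType) (A : pred J)
    (P : J -> pt R n -> Prop) : pt R n -> Prop :=
  fun x => exists y : J -> pt R n,
    (forall j, A j -> P j (y j)) /\
    (forall i, x i = \sum_(j | A j) y j i).

Definition adm_set (n : nat) (e : rel 'I_n) (m : nat) (S : {set 'I_n}) : bool :=
  [&& S != set0, (#|S| <= m.+1)%N & induced_connected e S].

Definition graph_polytope (R : realType) (n : nat) (e : rel 'I_n) (m : nat)
    : pt R n -> Prop :=
  minkowski (adm_set e m) (fun S => @simplex R n S).

Definition face_w (R : realType) (n : nat) (P : pt R n -> Prop) (w : pt R n)
    : pt R n -> Prop :=
  fun x => P x /\ forall y, P y -> dotp w y <= dotp w x.

Definition set_eq (R : realType) (n : nat) (A B : pt R n -> Prop) : Prop :=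
  forall x, A x <-> B x.

Definition is_face (R : realType) (n : nat) (P F : pt R n -> Prop) : Prop :=
  (exists x, F x) /\ exists w, set_eq F (face_w P w).

Definition normal_cone (R : realType) (n : nat) (P F : pt R n -> Prop)
    : pt R n -> Prop :=
  fun w => forall x, F x -> face_w P w x.

Definition normally_equivalent (R : realType) (n : nat) (P Q : pt R n -> Prop)
    : Prop :=
  (forall F, is_face P F ->
     exists G, is_face Q G /\ set_eq (normal_cone P F) (normal_cone Q G)) /\
  (forall G, is_face Q G ->
     exists F, is_face P F /\ set_eq (normal_cone P F) (normal_cone Q G)).

From HB Require Import structures.
From mathcomp Require Import all_boot all_order all_algebra.
From mathcomp Require Import reals.
From mathcomp Require Import zify.
Set Implicit Arguments. Unset Strict Implicit. Unset Printing Implicit Defensive.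
Import Order.TTheory GRing.Theory Num.Theory.

(* A linear functional w0 is maximized on Q_{Gamma,m} exactly by the sums of
   the faces of the Delta_S spanned by the w0-maximizers in S, so w lies in the
   normal cone of that face iff, on every admissible S, each w0-maximizer is
   also a w-maximizer. For m >= |M| - 1 this condition does not depend on m:
   given a connected S, a w0-maximizer u in S and any t in S, a shortest path
   from u to t inside S is an induced path, hence has at most |M| vertices, and
   applying the condition to it gives w t <= w u. *)


Section SumEquality.
Local Open Scope ring_scope.

Lemma ler_sum_eq_termwise (R : numDomainType) (I : finType) (P : pred I)
    (F G : I -> R) :
  (forall i, P i -> F i <= G i) -> \sum_(i | P i) F i = \sum_(i | P i) G i ->
  forall i, P i -> F i = G i.
Proof.
move=> leFG eq_sum i Pi; apply/eqP; rewrite eq_sym -subr_eq0; apply/eqP.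
apply: (psumr_eq0P (F := fun j => G j - F j)) Pi => [j Pj|].
  by rewrite subr_ge0 leFG.
by rewrite sumrB eq_sum subrr.
Qed.

End SumEquality.

Section GraphPolytope.
Variables (R : realType) (n : nat).
Local Open Scope ring_scope.
Implicit Types (w x y : pt R n) (S T : {set 'I_n}).

Definition argmax_in w S (u : 'I_n) : Prop :=
  u \in S /\ forall t, t \in S -> w t <= w u.

Lemma argmax_in_eq w S u v : argmax_in w S u -> argmax_in w S v -> w u = w v.
Proof. by move=> [uS umax] [vS vmax]; apply/le_anti; rewrite umax ?vmax. Qed.

Lemma argmax_in_subset w S T u :
  T \subset S -> u \in T -> argmax_in w S u -> argmax_in w T u.
Proof. by move=> /subsetP TS uT [_ umax]; split=> // t /TS; apply: umax. Qed.

Definition argmax_refines (e : rel 'I_n) (m : nat) w0 w : Prop :=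
  forall S, adm_set e m S -> forall u, argmax_in w0 S u -> argmax_in w S u.

Lemma dotp_basis_vec w s : dotp w (basis_vec R s) = w s.
Proof.
rewrite /dotp (bigD1 s) //= /basis_vec eqxx mulr1 big1 ?addr0 // => i /negbTE.
by rewrite eq_sym => ->; rewrite mulr0.
Qed.

Lemma dotp_minkowski (J : finType) (A : pred J) (y : J -> pt R n) w x :
  (forall i, x i = \sum_(j | A j) y j i) -> dotp w x = \sum_(j | A j) dotp w (y j).
Proof.
move=> def_x; rewrite /dotp exchange_big /=.
by apply: eq_bigr => i _; rewrite def_x big_distrr.
Qed.

Lemma dotp_convex_comb S (lam : 'I_n -> R) w y :
  (forall i, y i = \sum_(s in S) lam s * basis_vec R s i) ->
  dotp w y = \sum_(s in S) lam s * w s.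
Proof.
move=> def_y; rewrite (dotp_minkowski _ def_y); apply: eq_bigr => s _.
rewrite -(dotp_basis_vec w s) /dotp big_distrr /=.
by apply: eq_bigr => i _; rewrite mulrCA.
Qed.

Lemma simplex_dotp_le S y w a : simplex S y -> argmax_in w S a -> dotp w y <= w a.
Proof.
move=> [lam [lam_ge0 lam_sum1 def_y]] [_ amax]; rewrite (dotp_convex_comb _ def_y).
rewrite -[w a]mul1r -lam_sum1 mulr_suml; apply: ler_sum => s sS.
by rewrite ler_wpM2l ?lam_ge0 ?amax.
Qed.

(* A point of [Delta_S] maximizing [w0] only charges [w0]-maximizers, and
   these all maximize [w] as well. *)
Lemma simplex_dotp_max S y w0 w a0 a :
  simplex S y -> argmax_in w0 S a0 -> argmax_in w S a ->
  (forall u, argmax_in w0 S u -> argmax_in w S u) ->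
  dotp w0 y = w0 a0 -> dotp w y = w a.
Proof.
move=> [lam [lam_ge0 lam_sum1 def_y]] a0max amax refines.
rewrite !(dotp_convex_comb _ def_y) => eq_w0.
have charged s : s \in S -> lam s * w0 s = lam s * w0 a0.
  apply: (ler_sum_eq_termwise (P := mem S)
    (F := fun t => lam t * w0 t) (G := fun t => lam t * w0 a0)) => [t tS|].
    by rewrite ler_wpM2l ?lam_ge0 ?a0max.2.
  by rewrite eq_w0 -mulr_suml lam_sum1 mul1r.
rewrite -[w a]mul1r -lam_sum1 mulr_suml; apply: eq_bigr => s sS.
have [->|lam_neq0] := eqVneq (lam s) 0; first by rewrite !mul0r.
congr (_ * _); apply: argmax_in_eq amax; apply: refines; split=> // t tS.
by rewrite (mulfI lam_neq0 (charged s sS)) a0max.2.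
Qed.

Variables (e : rel 'I_n) (m : nat) (i0 : 'I_n).
Notation Q := (@graph_polytope R n e m).

Definition argmax w S : 'I_n :=
  [arg max_(i > odflt i0 [pick x in S] in S) w i]%O.

Lemma argmaxP w S : S != set0 -> argmax_in w S (argmax w S).
Proof.
case/set0Pn=> x xS; rewrite /argmax; case: pickP => [y yS|/(_ x)]; last by rewrite xS.
by case: arg_maxP => // j jS jmax; split=> // t /jmax.
Qed.

Lemma adm_set_neq0 S : adm_set e m S -> S != set0.
Proof. by case/and3P. Qed.

Definition max_dotp w : R := \sum_(S | adm_set e m S) w (argmax w S).

Lemma dotp_le_max_dotp w x : Q x -> dotp w x <= max_dotp w.
Proof.
move=> [y [y_simplex def_x]]; rewrite (dotp_minkowski _ def_x).
apply: ler_sum => S admS; apply: simplex_dotp_le (y_simplex S admS) _.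
exact/argmaxP/adm_set_neq0.
Qed.

Definition choice_point (b : {set 'I_n} -> 'I_n) : pt R n :=
  fun i => \sum_(S | adm_set e m S) basis_vec R (b S) i.

Lemma choice_point_in b : (forall S, adm_set e m S -> b S \in S) -> Q (choice_point b).
Proof.
move=> bS; exists (fun S => basis_vec R (b S)); split=> // S admS.
exists (fun s => (s == b S)%:R); split=> [s _||i]; first by rewrite ler0n.
  by rewrite (bigD1 (b S)) ?bS //= eqxx big1 ?addr0 // => s /andP[_ /negbTE->].
rewrite (bigD1 (b S)) ?bS //= eqxx mul1r big1 ?addr0 // => s /andP[_ /negbTE->].
by rewrite mul0r.
Qed.

Lemma dotp_choice_point w b :
  dotp w (choice_point b) = \sum_(S | adm_set e m S) w (b S).
Proof.
rewrite (@dotp_minkowski _ _ (fun S => basis_vec R (b S)) _ _ (fun _ => erefl)).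
by apply: eq_bigr => S _; rewrite dotp_basis_vec.
Qed.

Lemma face_wE w x : face_w Q w x <-> Q x /\ dotp w x = max_dotp w.
Proof.
split=> [[Qx xmax]|[Qx eq_x]]; last by split=> // y; rewrite eq_x; apply: dotp_le_max_dotp.
split=> //; apply/le_anti; rewrite dotp_le_max_dotp //=.
have /xmax : Q (choice_point (argmax w)).
  by apply: choice_point_in => S /adm_set_neq0 /(argmaxP w)[].
by rewrite dotp_choice_point.
Qed.

Lemma face_w_neq0 w : exists x, face_w Q w x.
Proof.
exists (choice_point (argmax w)); apply/face_wE; rewrite dotp_choice_point.
by split=> //; apply: choice_point_in => S /adm_set_neq0 /(argmaxP w)[].
Qed.

(* Replace the [w0]-maximizer chosen in [S] by [u]: the point stays on the [w0]-face. *)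
Lemma normal_cone_argmax_refines w0 w :
  normal_cone Q (face_w Q w0) w -> argmax_refines e m w0 w.
Proof.
move=> w_cone S admS u u_w0max.
pose b S' := if S' == S then u else argmax w0 S'.
have b_w0max S' : adm_set e m S' -> argmax_in w0 S' (b S').
  by rewrite /b; case: eqP => [-> //|_ /adm_set_neq0/argmaxP].
have /w_cone/face_wE[_] : face_w Q w0 (choice_point b).
  apply/face_wE; split.
    by apply: choice_point_in => S' admS'; case: (b_w0max S' admS').
  rewrite dotp_choice_point; apply: eq_bigr => S' admS'.
  exact: argmax_in_eq (b_w0max S' admS') (argmaxP w0 (adm_set_neq0 admS')).
rewrite dotp_choice_point => eq_sum.
have le_w S' : adm_set e m S' -> w (b S') <= w (argmax w S').
  by move=> admS'; apply: (argmaxP w (adm_set_neq0 admS')).2; case: (b_w0max S' admS').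
have := ler_sum_eq_termwise le_w eq_sum admS; rewrite /b eqxx => wu.
have [_ wmax] := argmaxP w (adm_set_neq0 admS).
by split=> [|t tS]; [case: u_w0max | rewrite wu wmax].
Qed.

Lemma argmax_refines_normal_cone w0 w :
  argmax_refines e m w0 w -> normal_cone Q (face_w Q w0) w.
Proof.
move=> refines x /face_wE[Qx eq_w0]; apply/face_wE; split=> //.
case: (Qx) => y [y_simplex def_x].
rewrite /max_dotp (dotp_minkowski _ def_x); apply: eq_bigr => S admS.
rewrite /max_dotp (dotp_minkowski _ def_x) in eq_w0.
have [w0max wmax] := (argmaxP w0 (adm_set_neq0 admS), argmaxP w (adm_set_neq0 admS)).
apply: simplex_dotp_max (y_simplex S admS) w0max wmax (refines S admS) _.
apply: ler_sum_eq_termwise eq_w0 S admS => S' admS'.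
exact: simplex_dotp_le (y_simplex S' admS') (argmaxP w0 (adm_set_neq0 admS')).
Qed.

Lemma normal_cone_face_wE w0 w :
  normal_cone Q (face_w Q w0) w <-> argmax_refines e m w0 w.
Proof.
by split; [apply: normal_cone_argmax_refines | apply: argmax_refines_normal_cone].
Qed.

End GraphPolytope.

Lemma normal_cone_set_eq (R : realType) (n : nat) (P F G : pt R n -> Prop) :
  set_eq F G -> set_eq (normal_cone P F) (normal_cone P G).
Proof. by move=> eqFG w; split=> wF x /eqFG; apply: wF. Qed.

Lemma normally_equivalent_face_w (R : realType) (n : nat) (P Q : pt R n -> Prop) :
  (forall w, exists x, face_w P w x) -> (forall w, exists x, face_w Q w x) ->
  (forall w0 w, normal_cone P (face_w P w0) w <-> normal_cone Q (face_w Q w0) w) ->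
  normally_equivalent P Q.
Proof.
move=> P_face Q_face eq_cones; split=> [F [_ [w0 eqF]]|G [_ [w0 eqG]]].
- exists (face_w Q w0); split; first by split; [exact: Q_face | exists w0].
  by move=> w; apply: iff_trans (normal_cone_set_eq P eqF w) (eq_cones w0 w).
- exists (face_w P w0); split; first by split; [exact: P_face | exists w0].
  move=> w; apply: iff_trans (eq_cones w0 w) (iff_sym _).
  exact: normal_cone_set_eq.
Qed.

Section InducedGeodesics.
Variables (n : nat) (e : rel 'I_n) (S : {set 'I_n}) (u : 'I_n).
Hypothesis uS : u \in S.

Fixpoint walk_end (N : nat) : pred 'I_n :=
  if N is N'.+1 then fun x => [exists y, walk_end N' y && induced_rel e S y x]
  else pred1 u.

Definition at_distance (x : 'I_n) (N : nat) : Prop :=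
  walk_end N x /\ forall M, walk_end M x -> N <= M.

Lemma connect_walk_end v : connect (induced_rel e S) u v -> exists N, walk_end N v.
Proof.
case/connectP=> p + ->; elim/last_ind: p => [_|p z IHp]; first by exists 0; rewrite /= eqxx.
rewrite rcons_path last_rcons => /andP[/IHp[N walk_p] p_z].
by exists N.+1; apply/existsP; exists (last u p); apply/andP.
Qed.

Lemma walk_end_in N x : walk_end N x -> x \in S.
Proof. by case: N => [/eqP-> //|N] /existsP[y /andP[_ /and3P[]]]. Qed.

Lemma at_distance_uniq x N1 N2 : at_distance x N1 -> at_distance x N2 -> N1 = N2.
Proof. by move=> [walk1 min1] [walk2 min2]; apply/eqP; rewrite eqn_leq min1 ?min2. Qed.

Lemma at_distance_edge x y Nx Ny :
  at_distance x Nx -> at_distance y Ny -> induced_rel e S x y -> Ny <= Nx.+1.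
Proof. by move=> [walk_x _] [_ min_y] xy; apply/min_y/existsP; exists x; apply/andP. Qed.

Lemma at_distance_pred v N :
  at_distance v N.+1 -> exists2 y, at_distance y N & induced_rel e S y v.
Proof.
case=> /existsP[y /andP[walk_y yv]] min_v; exists y => //; split=> // M walk_M.
by rewrite -ltnS; apply: min_v; apply/existsP; exists y; apply/andP.
Qed.

Lemma geodesic_exists v N : at_distance v N -> exists g : nat -> 'I_n,
  [/\ g N = v, forall j, j <= N -> at_distance (g j) j &
      forall j, j < N -> induced_rel e S (g j) (g j.+1)].
Proof.
elim: N v => [|N IHN] v dist_v.
  by exists (fun=> v); split=> // j; rewrite leqn0 => /eqP->.
have [y /IHN[g [gN g_dist g_edge]] yv] := at_distance_pred dist_v.
exists (fun j => if j == N.+1 then v else g j); split=> [||j]; first by rewrite eqxx.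
  by move=> j; rewrite leq_eqVlt; case: eqP => [-> //|_]; apply: g_dist.
rewrite ltnS => le_jN; rewrite (ltn_eqF (leq_ltn_trans le_jN (ltnSn N))) eqSS.
by case: eqP => [->|/eqP ne_jN]; rewrite ?gN //; apply: g_edge; rewrite ltn_neqAle ne_jN.
Qed.

Section Geodesic.
Hypotheses (e_sym : symmetric e) (e_irr : irreflexive e).
Variables (g : nat -> 'I_n) (N : nat).
Hypothesis g_dist : forall j, j <= N -> at_distance (g j) j.
Hypothesis g_edge : forall j, j < N -> induced_rel e S (g j) (g j.+1).

Let T := [set g j | j : 'I_N.+1].

Lemma geodesic_inj i j : i <= N -> j <= N -> g i = g j -> i = j.
Proof.
by move=> iN jN gij; apply: at_distance_uniq (g_dist iN) _; rewrite gij; apply: g_dist.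
Qed.

Lemma mem_geodesic j : j <= N -> g j \in T.
Proof. by move=> jN; apply/imsetP; exists (Ordinal (jN : j < N.+1)). Qed.

Lemma geodesicP x : x \in T -> exists2 j, j <= N & x = g j.
Proof. by case/imsetP=> j _ ->; exists j; first exact: ltn_ord j. Qed.

Lemma card_geodesic : #|T| = N.+1.
Proof.
rewrite card_imset ?card_ord // => i j /geodesic_inj eq_ij.
by apply/val_inj/eq_ij; rewrite -ltnS.
Qed.

Lemma geodesic_sub : T \subset S.
Proof. by apply/subsetP=> _ /geodesicP[j jN ->]; case: (g_dist jN) => /walk_end_in. Qed.

Lemma geodesic_connected : induced_connected e T.
Proof.
have g0 : g 0 = u by case: (g_dist (leq0n N)) => /eqP.
have connect_g j : j <= N -> connect (induced_rel e T) u (g j).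
  elim: j => [|j IHj] jN; first by rewrite g0.
  apply: connect_trans (IHj (ltnW jN)) (connect1 _).
  by case/and3P: (g_edge jN) => gj _ _; rewrite /induced_rel /= gj !mem_geodesic // ltnW.
have T_sym : connect_sym (induced_rel e T).
  by apply: sym_connect_sym => x y; rewrite /induced_rel /= e_sym [(y \in T) && _]andbC.
apply/andP; split; first by apply/set0Pn; exists (g 0); apply: mem_geodesic.
apply/forallP=> x; apply/implyP=> /geodesicP[i iN ->].
apply/forallP=> y; apply/implyP=> /geodesicP[j jN ->].
by apply: connect_trans (connect_g j jN); rewrite T_sym connect_g.
Qed.

(* A shortest walk has no chords: the distance to [u] changes by at most one
   along an edge, and [g j] is at distance [j]. *)
Lemma geodesic_is_path : induced_is_path e T.
Proof.
have le_N (i : 'I_#|T|) : i <= N by rewrite -ltnS -card_geodesic ltn_ord.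
exists (fun i : 'I_#|T| => g i); split=> [i j /geodesic_inj eq_ij||i j].
- exact/val_inj/eq_ij.
- by move=> i; apply: mem_geodesic.
apply/idP/idP => [e_ij|].
  have gS k : k <= N -> g k \in S by move/mem_geodesic/(subsetP geodesic_sub).
  have Sij : induced_rel e S (g i) (g j) by rewrite /induced_rel /= e_ij !gS.
  have Sji : induced_rel e S (g j) (g i) by rewrite /induced_rel /= e_sym e_ij !gS.
  have := at_distance_edge (g_dist (le_N i)) (g_dist (le_N j)) Sij.
  have := at_distance_edge (g_dist (le_N j)) (g_dist (le_N i)) Sji.
  have : (i : nat) != j by apply: contraTneq e_ij => /val_inj->; rewrite e_irr.
  by move: (i : nat) (j : nat) => a b; lia.
case/orP=> /eqP eq_ij.
  have iN : i < N by rewrite eq_ij le_N.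
  by case/and3P: (g_edge iN); rewrite eq_ij.
have jN : j < N by rewrite eq_ij le_N.
by case/and3P: (g_edge jN); rewrite e_sym eq_ij.
Qed.

End Geodesic.

Lemma induced_path_through v :
  symmetric e -> irreflexive e -> induced_connected e S -> v \in S ->
  exists T : {set 'I_n},
    [/\ T \subset S, u \in T, v \in T, induced_connected e T & induced_is_path e T].
Proof.
move=> e_sym e_irr /andP[_ /forallP/(_ u)/implyP/(_ uS)/forallP/(_ v)/implyP conn] vS.
case: (ex_minnP (connect_walk_end (conn vS))) => N walk_v min_v.
have [g [gN g_dist g_edge]] := geodesic_exists (conj walk_v min_v).
have g0 : g 0 = u by case: (g_dist _ (leq0n N)) => /eqP.
exists [set g j | j : 'I_N.+1]; split.
- exact: geodesic_sub.
- by rewrite -g0 mem_geodesic.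
- by rewrite -gN mem_geodesic.
- exact: geodesic_connected.
- exact: geodesic_is_path.
Qed.

End InducedGeodesics.

Lemma argmax_refines_le (R : realType) (n : nat) (e : rel 'I_n) (m m' : nat)
    (w0 w : pt R n) :
  m <= m' -> argmax_refines e m' w0 w -> argmax_refines e m w0 w.
Proof.
move=> le_mm' refines S /and3P[S_neq0 le_S S_conn]; apply: refines.
by apply/and3P; split=> //; apply: leq_trans le_S _.
Qed.

Lemma argmax_refines_induced_paths (R : realType) (n : nat) (e : rel 'I_n)
    (L k : nat) (w0 w : pt R n) :
  symmetric e -> irreflexive e ->
  (forall T, induced_is_path e T -> #|T| <= L) ->
  argmax_refines e (L - 1) w0 w -> argmax_refines e k w0 w.
Proof.
move=> e_sym e_irr path_le refines S /and3P[_ _ S_conn] u [uS u_w0max].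
split=> // t tS.
have [T [sub_TS uT tT T_conn T_path]] := induced_path_through uS e_sym e_irr S_conn tS.
have admT : adm_set e (L - 1) T.
  apply/and3P; split=> //; first by apply/set0Pn; exists u.
  have := path_le T T_path; have : 0 < #|T| by apply/card_gt0P; exists u.
  by lia.
have [_ ->] // := refines T admT u (argmax_in_subset sub_TS uT (conj uS u_w0max)).
Qed.

Theorem mainTheorem5 (R : realType) (n : nat) (e : rel 'I_n)
  (e_sym : symmetric e) (e_irr : irreflexive e)
  (e_conn : connected_graph e)
  (M : {set 'I_n})
  (M_path : induced_is_path e M)
  (M_max : forall S : {set 'I_n}, induced_is_path e S -> #|S| <= #|M|) :
  forall k : nat, #|M| <= k ->
    normally_equivalent (@graph_polytope R n e k)
                        (@graph_polytope R n e (#|M| - 1)).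
Proof.
move=> k le_Mk.
have [i0 _] : exists i0 : 'I_n, true by case/andP: e_conn => /set0Pn[x _] _; exists x.
apply: normally_equivalent_face_w => [w|w|w0 w].
- exact: face_w_neq0 e k i0 w.
- exact: face_w_neq0 e (#|M| - 1) i0 w.
- apply: iff_trans (normal_cone_face_wE e k i0 w0 w) _.
  apply: iff_trans _ (iff_sym (normal_cone_face_wE e (#|M| - 1) i0 w0 w)).
  split; first exact: argmax_refines_le (leq_trans (leq_subr 1 _) le_Mk).
  exact: argmax_refines_induced_paths.
Qed.
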